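(* For every $M>1$ there exists $c=c(M)>0$ (depending only on $M$, not on $d$ or $T$) such that the following holds. Let $T$ be a directed tree on $[d]$ and let $X=(X_1,\dots,X_d)$ follow the linear structural equation model $X_k=\sum_{j}\beta_{kj}X_j+\eta_k$, where $\beta_{kj}\neq0$ only if $j$ is the parent of $k$ in $T$, and the $\eta_k\sim\mathcal{N}(0,\sigma_k^2)$ are mutually independent. If $|\beta_{kj}|\in[M^{-1},M]$ for every nonzero $\beta_{kj}$ and $\sigma_k^2\in[M^{-1},M]$ for every $k$, then the distribution $P$ of $X$ is $c$-strong tree-faithful to $T$.
   Context: A directed tree on $[d]$ is a directed graph with a root $u$ such that every other node is reached from $u$ by exactly one directed path (so non-root nodes have exactly one parent and there are no v-structures). For $\ell\in([d]\cup\{\emptyset\})\setminus\{j,k\}$, $\rho(X_j,X_k\mid X_\ell)$ denotes the partial correlation given $X_\ell$ (ordinary correlation if $\ell=\emptyset$). $P$ is $c$-strong tree-faithful to a polytree $T$ if (1) for every edge $j-k$ of $T$ and every $\ell\in([d]\cup\{\emptyset\})\setminus\{j,k\}$, $|\rho(X_j,X_k\mid X_\ell)|\ge c$; and (2) for every v-structure $k\to\ell\leftarrow j$ in $T$, $|\rho(X_k,X_j\mid X_\ell)|\ge c$. *)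

From HB Require Import structures.
From mathcomp Require Import all_boot all_order all_algebra.
From mathcomp Require Import reals.
Set Implicit Arguments. Unset Strict Implicit. Unset Printing Implicit Defensive.
Import Order.TTheory GRing.Theory Num.Theory.
Local Open Scope ring_scope.

(* A directed graph on [d] = 'I_d is given by its edge relation E :
   E j k  means  j -> k. *)

Definition dpath (d : nat) (E : rel 'I_d) (u v : 'I_d) (p : seq 'I_d) : bool :=
  [&& path E u p, uniq (u :: p) & last u p == v].

Definition acyclic (d : nat) (E : rel 'I_d) : Prop :=
  forall (x : 'I_d) (p : seq 'I_d), path E x p -> last x p = x -> p = [::].

Definition directed_tree (d : nat) (E : rel 'I_d) : Prop :=
  acyclic E /\
  exists u : 'I_d, forall v : 'I_d, v != u ->
    exists p : seq 'I_d, dpath E u v p /\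
      forall q : seq 'I_d, dpath E u v q -> q = p.

(* partial correlation rho(X_j, X_k | X_l) computed from the covariance
   matrix S of X; l = None is the empty conditioning set *)
Definition pcorr (R : realType) (d : nat) (S : 'M[R]_d) (j k : 'I_d)
    (l : option 'I_d) : R :=
  match l with
  | None => S j k / Num.sqrt (S j j * S k k)
  | Some l =>
      (S j k - S j l * S k l / S l l) /
      Num.sqrt ((S j j - S j l ^+ 2 / S l l) * (S k k - S k l ^+ 2 / S l l))
  end.

Definition strong_tree_faithful (R : realType) (d : nat) (c : R)
    (S : 'M[R]_d) (E : rel 'I_d) : Prop :=
  (forall j k : 'I_d, (E j k || E k j) ->
     forall l : option 'I_d, l != Some j -> l != Some k ->
       c <= `|pcorr S j k l|) /\
  (forall j k l : 'I_d, E k l -> E j l -> k != j -> ~~ E k j -> ~~ E j k ->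
       c <= `|pcorr S k j (Some l)|).

From HB Require Import structures.
From mathcomp Require Import all_boot all_order all_algebra.
From mathcomp Require Import reals.
From mathcomp Require Import ring lra.
Import Order.TTheory GRing.Theory Num.Theory.
Local Open Scope ring_scope.
Set Implicit Arguments. Unset Strict Implicit. Unset Printing Implicit Defensive.

(* Write X = A eta with A = (1 - B)^-1, so Sigma x y = sum_m sigma2_m A_xm A_ym;
   in a tree A_xm is the product of the edge weights along the path m -> x and
   vanishes when there is no such path.  For an edge j -> k we have
   X_k = beta X_j + eta_k, and eta_k is independent of X_j and of every
   non-descendant l of k; hence rho(X_j, X_k | X_l)^2 = beta^2 V / (beta^2 V +
   sigma2_k) with V = Var(X_j | X_l), and V is bounded below by looking only at
   the coordinates of eta at j and at the child of j towards l.  If l descends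
   from k, then X_l = gamma X_k + nu with nu independent of (X_j, X_k), and the
   squared partial correlation factors as rho(X_j, X_k)^2 N / (N + gamma^2
   sigma2_k) with N = Var nu >= gamma^2 times a constant.  Trees have no
   v-structures, so the second half of strong faithfulness is vacuous. *)

Section ConnectSteps.
Variables (T : finType) (e : rel T).

Lemma connect_last_edge x y :
  connect e x y -> y != x -> exists2 z, connect e x z & e z y.
Proof.
move=> /connectP[p + ->]; elim/last_ind: p => [|p z _]; first by rewrite eqxx.
rewrite rcons_path last_rcons => /andP[hp hz] _.
by exists (last x p) => //; apply/connectP; exists p.
Qed.

Lemma connect_first_edge x y :
  connect e x y -> y != x -> exists2 z, e x z & connect e z y.
Proof.
move=> /connectP[[|z p] /= + ->]; first by rewrite eqxx.
by move=> /andP[hxz hp] _; exists z => //; apply/connectP; exists p.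
Qed.

Lemma path_connect_last x p y :
  path e x p -> y \in x :: p -> connect e y (last x p).
Proof.
elim: p x y => [|z p IHp] x y /=; first by rewrite inE => _ /eqP ->.
case/andP=> hxz hp; rewrite inE => /predU1P[->|]; last exact: IHp.
exact: connect_trans (connect1 hxz) (IHp _ _ hp (mem_head _ _)).
Qed.

End ConnectSteps.

Section AcyclicGraph.
Variables (d : nat) (E : rel 'I_d).
Hypothesis acyclicE : acyclic E.

Lemma connect_antisym x y : connect E x y -> connect E y x -> x = y.
Proof.
move=> /connectP[p hp ->] /connectP[q hq hqx].
have := @acyclicE x (p ++ q).
rewrite cat_path hp hq last_cat -hqx => /(_ isT erefl).
by case: p {hp hq hqx}.
Qed.

Lemma edge_irrefl x : ~~ E x x.
Proof.
by apply/negP => hx; have := @acyclicE x [:: x]; rewrite /= hx => /(_ isT erefl).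
Qed.

Lemma edge_not_connect_back j k : E j k -> ~~ connect E k j.
Proof.
move=> hjk; apply/negP => /(connect_antisym (connect1 hjk)) ejk.
by move: hjk; rewrite ejk (negbTE (edge_irrefl k)).
Qed.

Lemma ancestor_ind (P : 'I_d -> Prop) :
  (forall x, (forall p, E p x -> P p) -> P x) -> forall x, P x.
Proof.
move=> IH x; pose anc y := #|[set z | connect E z y]|.
have anc_lt p y : E p y -> (anc p < anc y)%N.
  move=> hpy; apply: proper_card; rewrite properE; apply/andP; split.
    apply/subsetP => z; rewrite !inE => /connect_trans; apply; exact: connect1.
  apply/negP => /subsetP /(_ y); rewrite !inE connect0 => /(_ isT).
  by apply/negP; exact: edge_not_connect_back.
suff: forall n y, anc y = n -> P y by move/(_ _ x erefl).
elim/ltn_ind => n IHn y hy; apply: IH => p hp.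
by apply: (IHn (anc p)) => //; rewrite -hy; exact: anc_lt.
Qed.

End AcyclicGraph.

Lemma directed_tree_parent_uniq d (E : rel 'I_d) :
  directed_tree E -> forall m j k, E m k -> E j k -> m = j.
Proof.
case=> acyc [u hu] m j k hmk hjk.
have dpath_from_root v : exists p, dpath E u v p.
  have [->|/hu[p [hp _]]] := eqVneq v u; last by exists p.
  by exists [::]; rewrite /dpath /= eqxx.
have dpath_rcons v p : E v k -> dpath E u v p -> dpath E u k (rcons p k).
  move=> hvk /and3P[hp hun /eqP hl].
  rewrite /dpath rcons_path hp hl hvk last_rcons eqxx !andbT.
  rewrite -rcons_cons rcons_uniq hun andbT.
  apply: contraNN (edge_not_connect_back acyc hvk) => hk.
  by rewrite -hl; exact: path_connect_last hp hk.
have from_root v : connect E u v.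
  by have [p /and3P[hp _ /eqP <-]] := dpath_from_root v; apply/connectP; exists p.
have k_neq_u : k != u.
  apply: contraTneq (from_root m) => <-.
  exact: (edge_not_connect_back acyc hmk).
have [p [_ p_uniq]] := hu k k_neq_u.
have [pm hpm] := dpath_from_root m; have [pj hpj] := dpath_from_root j.
have := p_uniq _ (dpath_rcons _ _ hmk hpm).
rewrite -(p_uniq _ (dpath_rcons _ _ hjk hpj)).
move: hpm hpj => /and3P[_ _ /eqP <-] /and3P[_ _ /eqP <-].
by move/rcons_inj => [->].
Qed.

Section WeightedDot.
Variables (R : realDomainType) (d : nat) (s : 'I_d -> R).

(* The covariance of sum_m u_m eta_m and sum_m v_m eta_m for independent
   eta_m of variances s m. *)
Definition wdot (u v : 'I_d -> R) := \sum_m s m * u m * v m.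

Lemma wdotC u v : wdot u v = wdot v u.
Proof. by apply: eq_bigr => m _; rewrite mulrAC. Qed.

Lemma wdot_lin u v w c : (forall m, u m = c * v m + w m) ->
  forall z, wdot u z = c * wdot v z + wdot w z.
Proof.
move=> huvw z; rewrite /wdot big_distrr -big_split; apply: eq_bigr => m _ /=.
rewrite huvw; ring.
Qed.

Lemma wdot_delta k v : wdot (fun m => (k == m)%:R) v = s k * v k.
Proof.
rewrite /wdot (bigD1 k) //= eqxx mulr1 big1 ?addr0 // => m /negPf.
by rewrite eq_sym => ->; rewrite mulr0 mul0r.
Qed.

Lemma wdot_disjoint u v : (forall m, u m = 0 \/ v m = 0) -> wdot u v = 0.
Proof.
by move=> huv; apply: big1 => m _; case: (huv m) => ->; rewrite ?mulr0 ?mul0r.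
Qed.

Hypothesis s_gt0 : forall m, 0 < s m.

Let wdot_part_ge0 u (P : pred 'I_d) : 0 <= \sum_(m | P m) s m * u m * u m.
Proof.
apply: sumr_ge0 => m _; rewrite -mulrA -expr2.
by apply: mulr_ge0; [exact: ltW | exact: sqr_ge0].
Qed.

Lemma wdot_ge1 u m : s m * u m ^+ 2 <= wdot u u.
Proof. by rewrite /wdot (bigD1 m) //= -mulrA -expr2 lerDl wdot_part_ge0. Qed.

Lemma wdot_ge2 u m c : m != c -> s m * u m ^+ 2 + s c * u c ^+ 2 <= wdot u u.
Proof.
move=> hmc; rewrite /wdot (bigD1 m) // (bigD1 c) 1?eq_sym //= addrA.
by rewrite -!mulrA -!expr2 lerDl wdot_part_ge0.
Qed.

End WeightedDot.

Section TotalEffects.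
Variables (R : realFieldType) (d : nat) (E : rel 'I_d) (B : 'M[R]_d).
Hypothesis acyclicE : acyclic E.
Hypothesis B_edge : forall j k, ~~ E j k -> B k j = 0.

Let edge_of_B p x : B x p != 0 -> E p x.
Proof. by apply: contraNT => /B_edge ->. Qed.

Lemma unitmx_1B : (1%:M - B) \in unitmx.
Proof.
rewrite unitmxE unitfE -det_tr; apply/det0P => -[v v_neq0].
rewrite linearB /= trmx1 mulmxBr mulmx1 => /eqP; rewrite subr_eq0 => /eqP vB.
suff v0 x : v 0 x = 0.
  by case/eqP: v_neq0; apply/matrixP => i x; rewrite ord1 v0 mxE.
elim/(ancestor_ind acyclicE): x => x IH; rewrite vB mxE.
apply: big1 => m _; rewrite mxE.
have [->|hB] := eqVneq (B x m) 0; first by rewrite mulr0.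
by rewrite IH ?mul0r // edge_of_B.
Qed.

Definition effect := invmx (1%:M - B).

Lemma effect_rec x m : effect x m = (x == m)%:R + \sum_p B x p * effect p m.
Proof.
have effectE : effect = 1%:M + B *m effect.
  have := mulmxV unitmx_1B; rewrite mulmxBl mul1mx => /eqP.
  by rewrite subr_eq => /eqP.
by rewrite {1}effectE !mxE.
Qed.

Lemma effect_support x m : effect x m != 0 -> connect E m x.
Proof.
elim/(ancestor_ind acyclicE): x m => x IH m; apply: contraR => hmx.
rewrite effect_rec; have [exm|_] := eqVneq x m; first by rewrite exm connect0 in hmx.
rewrite add0r big1 // => p _.
have [->|/edge_of_B hpx] := eqVneq (B x p) 0; first by rewrite mul0r.
have [->|hpm] := eqVneq (effect p m) 0; first by rewrite mulr0.
by have := connect_trans (IH p hpx m hpm) (connect1 hpx); rewrite (negbTE hmx).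
Qed.

Lemma effect_eq0 x m : ~~ connect E m x -> effect x m = 0.
Proof. by apply: contraNeq; exact: effect_support. Qed.

Lemma effect_diag x : effect x x = 1.
Proof.
rewrite effect_rec eqxx big1 ?addr0 // => p _.
have [->|/edge_of_B hpx] := eqVneq (B x p) 0; first by rewrite mul0r.
have [->|/effect_support hxp] := eqVneq (effect p x) 0; first by rewrite mulr0.
by move: (edge_not_connect_back acyclicE hpx); rewrite hxp.
Qed.

Lemma covariance_wdot (Sigma : 'M[R]_d) (s : 'I_d -> R) :
  (1%:M - B) *m Sigma *m (1%:M - B)^T = diag_mx (\row_k s k) ->
  forall x y, Sigma x y = wdot s (effect x) (effect y).
Proof.
move=> hSigma x y.
have effectK : effect *m (1%:M - B) = 1%:M := mulVmx unitmx_1B.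
have -> : Sigma = effect *m ((1%:M - B) *m Sigma *m (1%:M - B)^T) *m effect^T.
  by rewrite !mulmxA effectK mul1mx -mulmxA -trmx_mul effectK trmx1 mulmx1.
rewrite hSigma mul_mx_diag !mxE; apply: eq_bigr => m _.
by rewrite !mxE (mulrC (effect x m)).
Qed.

Hypothesis parent_uniq : forall m j k, E m k -> E j k -> m = j.

Lemma effect_edge j k : E j k ->
  forall m, effect k m = B k j * effect j m + (k == m)%:R.
Proof.
move=> hjk m; rewrite effect_rec addrC (bigD1 j) //= big1 ?addr0 // => p hpj.
have [->|/edge_of_B hpk] := eqVneq (B k p) 0; first by rewrite mul0r.
by rewrite (parent_uniq hpk hjk) eqxx in hpj.
Qed.

Lemma effect_trans x m m' : connect E m x -> connect E m' m ->
  effect x m' = effect x m * effect m m'.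
Proof.
elim/(ancestor_ind acyclicE): x m m' => x IH m m' hmx hm'm.
have [<-|hxm] := eqVneq x m; first by rewrite effect_diag mul1r.
have hxm' : x != m'.
  apply: contraNneq hxm => exm'; apply/eqP/(connect_antisym acyclicE _ hmx).
  by rewrite exm'.
have [q hmq hqx] := connect_last_edge hmx hxm.
rewrite [effect x m']effect_rec [effect x m]effect_rec (negbTE hxm) (negbTE hxm').
rewrite !add0r big_distrl /=; apply: eq_bigr => p _.
have [->|/edge_of_B hpx] := eqVneq (B x p) 0; first by rewrite !mul0r.
have epq := parent_uniq hpx hqx; subst p.
by rewrite (IH q hpx m m' hmq hm'm) mulrA.
Qed.

Lemma effect_via_child j l : connect E j l -> l != j ->
  exists c, [/\ E j c, c != j & effect l j = effect l c * B c j].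
Proof.
move=> hjl hlj; have [c hjc hcl] := connect_first_edge hjl hlj.
have hcj : c != j by apply: contraTneq hjc => ->; exact: edge_irrefl.
exists c; split => //.
rewrite (effect_trans hcl (connect1 hjc)) (effect_edge hjc j) effect_diag.
by rewrite mulr1 (negbTE hcj) addr0.
Qed.

End TotalEffects.

Lemma ler_normr_sqr (R : realDomainType) (c z : R) :
  0 <= c -> c ^+ 2 <= z ^+ 2 -> c <= `|z|.
Proof.
by move=> c_ge0; rewrite -[z ^+ 2]real_normK ?num_real // ler_sqr ?nnegrE.
Qed.

Section FaithfulnessConstant.
Variables (R : rcfType) (M : R).
Hypothesis M_gt1 : 1 < M.

Definition cond_var_lb := (M * (1 + M ^+ 2))^-1.
Definition signal_lb := M^-1 ^+ 2 * cond_var_lb.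
(* A squared correlation x / (x + s) with x >= signal_lb and s <= M is at least
   faith_const. *)
Definition faith_const := signal_lb / (signal_lb + M).

Let M_gt0 : 0 < M := lt_trans ltr01 M_gt1.
Let invM_gt0 : 0 < M^-1. Proof. by rewrite invr_gt0. Qed.
Let sqrM1_gt0 : 0 < 1 + M ^+ 2. Proof. by rewrite ltr_pwDl ?sqr_ge0. Qed.

Lemma cond_var_lb_gt0 : 0 < cond_var_lb.
Proof. by rewrite invr_gt0 mulr_gt0. Qed.

Lemma cond_var_lb_le_invM : cond_var_lb <= M^-1.
Proof.
rewrite /cond_var_lb invrM ?unitfE ?gt_eqF // mulrC ger_pMr // invf_le1 //.
by rewrite lerDl sqr_ge0.
Qed.

Lemma signal_lb_gt0 : 0 < signal_lb.
Proof. by rewrite mulr_gt0 ?exprn_gt0 ?cond_var_lb_gt0. Qed.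

Lemma signal_lb_le : signal_lb <= M^-1 ^+ 3.
Proof. by rewrite exprSr ler_pM2l ?exprn_gt0 ?cond_var_lb_le_invM. Qed.

Lemma faith_const_gt0 : 0 < faith_const.
Proof. by rewrite divr_gt0 ?addr_gt0 ?signal_lb_gt0. Qed.

Lemma faith_const_sqr_le : faith_const ^+ 2 <= faith_const.
Proof.
have c_le1 : faith_const <= 1.
  by rewrite ler_pdivrMr ?addr_gt0 ?signal_lb_gt0 // mul1r lerDl ltW.
by rewrite expr2 ger_pMr ?faith_const_gt0.
Qed.

Lemma faith_const_le_ratio x s : 0 < x -> 0 < s -> signal_lb * s <= x * M ->
  faith_const <= x / (x + s).
Proof.
move=> x_gt0 s_gt0 hxs; have sl_gt0 := signal_lb_gt0.
rewrite ler_pdivrMr ?addr_gt0 ?signal_lb_gt0 // mulrAC ler_pdivlMr ?addr_gt0 //.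
nra.
Qed.

Lemma sqr_mul_signal_lb_le u b y : `|b| <= M -> M^-1 <= y ->
  (u * b) ^+ 2 * signal_lb <= y * u ^+ 2.
Proof.
move=> hb hy; rewrite exprMn -mulrA mulrC ler_wpM2r ?sqr_ge0 //.
apply: le_trans hy; have -> : M^-1 = M ^+ 2 * M^-1 ^+ 3 by field; rewrite gt_eqF.
apply: ler_pM; rewrite ?sqr_ge0 ?signal_lb_le //; first exact: ltW signal_lb_gt0.
by rewrite -real_normK ?num_real // lerXn2r ?nnegrE ?(ltW M_gt0).
Qed.

Lemma cond_var_lb_le x y b v : M^-1 <= x -> M^-1 <= y -> `|b| <= M ->
  cond_var_lb <= x * (1 - b * v) ^+ 2 + y * v ^+ 2.
Proof.
move=> hx hy hb; set Q := (1 - b * v) ^+ 2 + v ^+ 2.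
(* Q >= 1 / (1 + b ^+ 2), its minimum over v. *)
have b2_le : b ^+ 2 <= M ^+ 2.
  by rewrite -real_normK ?num_real // lerXn2r ?nnegrE ?(ltW M_gt0).
have Q_ge : 1 <= (1 + M ^+ 2) * Q.
  have -> : (1 + M ^+ 2) * Q =
      1 + (b - (1 + b ^+ 2) * v) ^+ 2 + (M ^+ 2 - b ^+ 2) * Q.
    by rewrite /Q; ring.
  rewrite -addrA lerDl addr_ge0 ?sqr_ge0 // mulr_ge0 ?subr_ge0 //.
  by rewrite addr_ge0 ?sqr_ge0.
have : cond_var_lb <= M^-1 * Q.
  rewrite /cond_var_lb invrM ?unitfE ?gt_eqF // mulrC ler_pM2l //.
  by rewrite -[_^-1]mulr1 ler_pdivrMl.
move: (sqr_ge0 (1 - b * v)) (sqr_ge0 v); rewrite /Q; nra.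
Qed.

Lemma faith_const_le_signal_noise b q s : signal_lb <= b ^+ 2 * q -> 0 < q ->
  0 < s <= M -> faith_const <= `|b * q / Num.sqrt (q * (b ^+ 2 * q + s))|.
Proof.
move=> hbq q_gt0 /andP[s_gt0 s_le]; have sl_gt0 := signal_lb_gt0.
have bq_gt0 : 0 < b ^+ 2 * q := lt_le_trans sl_gt0 hbq.
apply: ler_normr_sqr; first exact: ltW faith_const_gt0.
rewrite [X in _ <= X]expr_div_n sqr_sqrtr; last first.
  by apply/ltW; rewrite mulr_gt0 ?addr_gt0.
have -> : (b * q) ^+ 2 / (q * (b ^+ 2 * q + s)) = b ^+ 2 * q / (b ^+ 2 * q + s).
  by field; rewrite gt_eqF ?addr_gt0 // gt_eqF.
apply: le_trans faith_const_sqr_le _; apply: faith_const_le_ratio => //; nra.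
Qed.

Lemma faith_const_le_descendant b V s g N K L :
  signal_lb <= b ^+ 2 * V -> 0 < V -> 0 < s <= M -> g != 0 ->
  g ^+ 2 * signal_lb <= N -> K = b ^+ 2 * V + s -> L = g ^+ 2 * K + N ->
  faith_const <= `|(b * V - g * (b * V) * (g * K) / L) /
    Num.sqrt ((V - (g * (b * V)) ^+ 2 / L) * (K - (g * K) ^+ 2 / L))|.
Proof.
move=> hbV V_gt0 /andP[s_gt0 s_le] g_neq0 hN -> -> {K L}.
have sl_gt0 := signal_lb_gt0.
have bV_gt0 : 0 < b ^+ 2 * V := lt_le_trans sl_gt0 hbV.
have g2_gt0 : 0 < g ^+ 2 by rewrite exprn_even_gt0.
have N_gt0 : 0 < N by apply: lt_le_trans hN; rewrite mulr_gt0.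
set K := b ^+ 2 * V + s; have K_gt0 : 0 < K by rewrite /K addr_gt0.
set L := g ^+ 2 * K + N; have L_gt0 : 0 < L by rewrite /L addr_gt0 // mulr_gt0.
have gsN_gt0 : 0 < N + g ^+ 2 * s by rewrite addr_gt0 // mulr_gt0.
apply: ler_normr_sqr; first exact: ltW faith_const_gt0.
have -> : V - (g * (b * V)) ^+ 2 / L = V * (N + g ^+ 2 * s) / L.
  by rewrite /L /K; field; rewrite gt_eqF.
have -> : K - (g * K) ^+ 2 / L = K * N / L by rewrite /L; field; rewrite gt_eqF.
rewrite [X in _ <= X]expr_div_n sqr_sqrtr; last first.
  by apply/ltW; rewrite !mulr_gt0 ?invr_gt0.
have -> : (b * V - g * (b * V) * (g * K) / L) ^+ 2 /
    (V * (N + g ^+ 2 * s) / L * (K * N / L)) =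
    (b ^+ 2 * V / (b ^+ 2 * V + s)) * (N / (N + g ^+ 2 * s)).
  by rewrite /L /K; field; rewrite !gt_eqF.
have fc_ge0 := ltW faith_const_gt0.
rewrite expr2; apply: ler_pM => //.
  by apply: faith_const_le_ratio => //; nra.
apply: faith_const_le_ratio => //; first by rewrite mulr_gt0.
have := ler_wpM2r (ltW s_gt0) hN; have := ler_wpM2l (ltW N_gt0) s_le; nra.
Qed.

End FaithfulnessConstant.

Lemma pcorrC (R : realType) d (S : 'M[R]_d) j k l :
  (forall x y, S x y = S y x) -> pcorr S j k l = pcorr S k j l.
Proof.
move=> SC; case: l => [l|] /=; last by rewrite SC (mulrC (S j j)).
by rewrite (SC k j) (mulrC (S k l)) (mulrC (S k k - _)).
Qed.

Section EdgeFaithfulness.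
Variables (R : realType) (M : R) (d : nat) (E : rel 'I_d).
Variables (B Sigma : 'M[R]_d) (s : 'I_d -> R).
Hypothesis M_gt1 : 1 < M.
Hypothesis acyclicE : acyclic E.
Hypothesis parent_uniq : forall m j k, E m k -> E j k -> m = j.
Hypothesis B_edge : forall j k, ~~ E j k -> B k j = 0.
Hypothesis B_bound : forall j k, E j k -> M^-1 <= `|B k j| <= M.
Hypothesis s_bound : forall k, M^-1 <= s k <= M.
Hypothesis Sigma_wdot : forall x y, Sigma x y = wdot s (effect B x) (effect B y).

Local Notation a := (effect B).
Let a_diag := effect_diag acyclicE B_edge.
Let a_eq0 := effect_eq0 acyclicE B_edge.
Let a_support := effect_support acyclicE B_edge.
Let a_edge := effect_edge acyclicE B_edge parent_uniq.
Let a_trans := effect_trans acyclicE B_edge parent_uniq.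
Let a_via_child := effect_via_child acyclicE B_edge parent_uniq.

Let invM_gt0 : 0 < M^-1.
Proof. by rewrite invr_gt0 (lt_trans ltr01 M_gt1). Qed.

Let s_gt0 k : 0 < s k.
Proof. by case/andP: (s_bound k) => /(lt_le_trans invM_gt0). Qed.

Let SigmaC x y : Sigma x y = Sigma y x.
Proof. by rewrite !Sigma_wdot wdotC. Qed.

Lemma Sigma_diag_ge x : M^-1 <= Sigma x x.
Proof.
rewrite Sigma_wdot; apply: le_trans (wdot_ge1 s_gt0 _ x).
by rewrite a_diag expr1n mulr1; case/andP: (s_bound x).
Qed.

Lemma B_sqr_ge j k : E j k -> M^-1 ^+ 2 <= B k j ^+ 2.
Proof.
case/B_bound/andP=> hB _.
by rewrite -[B k j ^+ 2]real_normK ?num_real // lerXn2r ?nnegrE ?(ltW invM_gt0).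
Qed.

Lemma signal_edge_ge j k : E j k -> signal_lb M <= B k j ^+ 2 * Sigma j j.
Proof.
move=> hjk; apply: le_trans (signal_lb_le M_gt1) _; rewrite exprSr.
by apply: ler_pM (B_sqr_ge hjk) (Sigma_diag_ge j); rewrite ?sqr_ge0 ?(ltW invM_gt0).
Qed.

Lemma Sigma_edge j k : E j k ->
  Sigma j k = B k j * Sigma j j /\ Sigma k k = B k j ^+ 2 * Sigma j j + s k.
Proof.
move=> hjk; have ak := a_edge hjk.
have ajk : a j k = 0 := a_eq0 (edge_not_connect_back acyclicE hjk).
have Sjk : Sigma j k = B k j * Sigma j j.
  by rewrite !Sigma_wdot wdotC (wdot_lin _ ak) wdot_delta ajk mulr0 addr0.
split=> //; rewrite Sigma_wdot (wdot_lin _ ak) wdot_delta a_diag -Sigma_wdot.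
by rewrite Sjk mulr1 mulrA -expr2.
Qed.

Lemma cond_var_ge j l : l != j ->
  cond_var_lb M <= Sigma j j - Sigma j l ^+ 2 / Sigma l l.
Proof.
move=> hlj; have L_gt0 : 0 < Sigma l l := lt_le_trans invM_gt0 (Sigma_diag_ge l).
set t := Sigma j l / Sigma l l; pose w m := a j m - t * a l m.
have hw m : w m = - t * a l m + a j m by rewrite /w addrC mulNr.
have -> : Sigma j j - Sigma j l ^+ 2 / Sigma l l = wdot s w w.
  rewrite (wdot_lin _ hw) ![wdot s _ w]wdotC !(wdot_lin _ hw) -!Sigma_wdot.
  by rewrite [Sigma l j]SigmaC /t; field; rewrite gt_eqF.
(* Var(X_j | X_l) = wdot s w w; when l descends from j, the coefficients of w
   at j and at the child of j towards l cannot both be small. *)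
have [alj0|alj_neq0] := eqVneq (a l j) 0.
  apply: le_trans (wdot_ge1 s_gt0 w j); rewrite /w alj0 a_diag mulr0 subr0.
  rewrite expr1n mulr1; apply: le_trans (cond_var_lb_le_invM M_gt1) _.
  by case/andP: (s_bound j).
have [c [hjc hcj alj]] := a_via_child (a_support alj_neq0) hlj.
apply: le_trans (wdot_ge2 s_gt0 w (_ : j != c)); last by rewrite eq_sym.
have -> : w j = 1 - B c j * (t * a l c) by rewrite /w a_diag alj; ring.
have -> : w c = - (t * a l c).
  by rewrite /w (a_eq0 (edge_not_connect_back acyclicE hjc)) sub0r.
rewrite sqrrN; apply: cond_var_lb_le => //.
- by case/andP: (s_bound j).
- by case/andP: (s_bound c).
- by case/andP: (B_bound hjc).
Qed.

Lemma pcorr_edge_marginal j k :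
  E j k -> faith_const M <= `|pcorr Sigma j k None|.
Proof.
move=> hjk; have [Sjk Skk] := Sigma_edge hjk.
rewrite /pcorr Sjk Skk; apply: (faith_const_le_signal_noise M_gt1).
- exact: signal_edge_ge.
- exact: lt_le_trans invM_gt0 (Sigma_diag_ge j).
- by rewrite s_gt0; case/andP: (s_bound k).
Qed.

Lemma pcorr_edge_nondescendant j k l : E j k -> l != j -> a l k = 0 ->
  faith_const M <= `|pcorr Sigma j k (Some l)|.
Proof.
move=> hjk hlj alk; have [Sjk Skk] := Sigma_edge hjk.
have L_gt0 : 0 < Sigma l l := lt_le_trans invM_gt0 (Sigma_diag_ge l).
have Skl : Sigma k l = B k j * Sigma j l.
  by rewrite !Sigma_wdot (wdot_lin _ (a_edge hjk)) wdot_delta alk mulr0 addr0.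
rewrite /pcorr Sjk Skk Skl.
have q_ge := cond_var_ge hlj; set q := Sigma j j - _ in q_ge *.
have -> : B k j * Sigma j j - Sigma j l * (B k j * Sigma j l) / Sigma l l =
    B k j * q.
  by rewrite /q; field; rewrite gt_eqF.
have -> : B k j ^+ 2 * Sigma j j + s k - (B k j * Sigma j l) ^+ 2 / Sigma l l =
    B k j ^+ 2 * q + s k.
  by rewrite /q; field; rewrite gt_eqF.
apply: (faith_const_le_signal_noise M_gt1).
- apply: ler_pM (B_sqr_ge hjk) q_ge; first exact: sqr_ge0.
  exact: ltW (cond_var_lb_gt0 M_gt1).
- exact: lt_le_trans (cond_var_lb_gt0 M_gt1) q_ge.
- by rewrite s_gt0; case/andP: (s_bound k).
Qed.

Lemma pcorr_edge_descendant j k l : E j k -> l != k -> a l k != 0 ->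
  faith_const M <= `|pcorr Sigma j k (Some l)|.
Proof.
move=> hjk hlk glk_neq0; have [Sjk Skk] := Sigma_edge hjk.
have hkl := a_support glk_neq0.
have [c [hkc _ glk]] := a_via_child hkl hlk.
(* X_l = a l k * X_k + nu, where nu only involves noise at non-ancestors of k. *)
pose nu m := a l m - a l k * a k m.
have al m : a l m = a l k * a k m + nu m by rewrite /nu addrC subrK.
have nu_perp u : (forall m, u m != 0 -> connect E m k) -> wdot s nu u = 0.
  move=> hu; apply: wdot_disjoint => m.
  have [->|/hu hmk] := eqVneq (u m) 0; [by right | left].
  by rewrite /nu (a_trans hkl hmk) subrr.
have nu_k : wdot s nu (a k) = 0 by apply: nu_perp => m /a_support.
have nu_j : wdot s nu (a j) = 0.
  by apply: nu_perp => m /a_support /connect_trans; apply; exact: connect1.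
set N := wdot s nu nu.
have Skl : Sigma k l = a l k * Sigma k k.
  by rewrite !Sigma_wdot wdotC (wdot_lin _ al) nu_k addr0.
have Sjl : Sigma j l = a l k * Sigma j k.
  rewrite !Sigma_wdot wdotC (wdot_lin _ al) wdotC nu_j addr0 -!Sigma_wdot.
  by rewrite SigmaC.
have Sll : Sigma l l = a l k ^+ 2 * Sigma k k + N.
  have nu_l : wdot s nu (a l) = N.
    by rewrite wdotC (wdot_lin _ al) wdotC nu_k mulr0 add0r.
  by rewrite Sigma_wdot (wdot_lin _ al) nu_l -Sigma_wdot Skl mulrA -expr2.
have N_ge : a l k ^+ 2 * signal_lb M <= N.
  apply: le_trans (wdot_ge1 s_gt0 nu c).
  rewrite /nu (a_eq0 (edge_not_connect_back acyclicE hkc)) mulr0 subr0 glk.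
  apply: sqr_mul_signal_lb_le => //; first by case/andP: (B_bound hkc).
  by case/andP: (s_bound c).
rewrite /pcorr Sll Sjl Skl Sjk Skk.
apply: (faith_const_le_descendant M_gt1 (signal_edge_ge hjk) _ _ glk_neq0 N_ge)
  => //.
- exact: lt_le_trans invM_gt0 (Sigma_diag_ge j).
- by rewrite s_gt0; case/andP: (s_bound k).
Qed.

Lemma pcorr_edge_ge j k l : E j k -> l != Some j -> l != Some k ->
  faith_const M <= `|pcorr Sigma j k l|.
Proof.
move=> hjk; case: l => [l /= hlj hlk|_ _]; last exact: pcorr_edge_marginal.
have [alk0|alk_neq0] := eqVneq (a l k) 0.
  exact: pcorr_edge_nondescendant.
exact: pcorr_edge_descendant.
Qed.

End EdgeFaithfulness.

Theorem lemma1 (R : realType) (M : R) (hM : 1 < M) :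
  exists c : R, 0 < c /\
  forall (d : nat) (E : rel 'I_d) (B Sigma : 'M[R]_d) (sigma2 : 'I_d -> R),
    directed_tree E ->
    (* beta_{kj} = B k j; nonzero exactly on edges j -> k of T, bounded *)
    (forall j k : 'I_d, E j k -> M^-1 <= `|B k j| <= M) ->
    (forall j k : 'I_d, ~~ E j k -> B k j = 0) ->
    (forall k : 'I_d, M^-1 <= sigma2 k <= M) ->
    (* Sigma is the covariance of X = B X + eta, eta ~ N(0, diag sigma2):
       Cov((I - B) X) = diag sigma2 *)
    (1%:M - B) *m Sigma *m (1%:M - B)^T = diag_mx (\row_k sigma2 k) ->
    strong_tree_faithful c Sigma E.
Proof.
exists (faith_const M); split; first exact: faith_const_gt0.
move=> d E B Sigma sigma2 tree B_bound B_edge sigma2_bound hSigma.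
have acyclicE : acyclic E := tree.1.
have parent_uniq := directed_tree_parent_uniq tree.
have Sigma_wdot := covariance_wdot acyclicE B_edge hSigma.
have pcorr_ge :=
  pcorr_edge_ge hM acyclicE parent_uniq B_edge B_bound sigma2_bound Sigma_wdot.
split=> [j k /orP[hjk|hkj] l hlj hlk|j k l hkl hjl hkj _ _].
- exact: pcorr_ge.
- by rewrite pcorrC ?pcorr_ge // => x y; rewrite !Sigma_wdot wdotC.
- by rewrite (parent_uniq _ _ _ hkl hjl) eqxx in hkj.
Qed.
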